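(* Let $n\ge2$. Then $$S_{NC}^\delta(n,-n)=\bigcup_{\pi\in NC(n)}\ \bigcup_{V\in\pi} S_{NC}^\delta(n,-n)_{\pi,V},$$ and this union is disjoint.
   Context: $[\pm n]=\{\pm1,\dots,\pm n\}$; permutations of $\{1,\dots,n\}$ are regarded as permutations of $[\pm n]$ fixing $-1,\dots,-n$. $\delta$ is the permutation $\delta(k)=-k$, $\gamma_n=(1,2,\dots,n)$, so $\gamma_n\delta\gamma_n^{-1}\delta=(1,\dots,n)(-n,\dots,-1)$. For a permutation $\sigma$, $\#(\sigma)$ is its number of cycles (including fixed points). $S_{NC}^\delta(n,-n)$ is the set of permutations $\sigma$ of $[\pm n]$ such that: the subgroup generated by $\sigma$ and $\gamma_n\delta\gamma_n^{-1}\delta$ acts transitively on $[\pm n]$; $\#(\sigma)+\#(\sigma^{-1}\gamma_n\delta\gamma_n^{-1}\delta)=2n$; and $\sigma\delta$ is a pairing (an involution without fixed points). A cycle of $\sigma$ is a through cycle if it meets both $\{1,\dots,n\}$ and $\{-1,\dots,-n\}$. $NC(n)$ is the set of non-crossing partitions of $\{1,\dots,n\}$; each $\pi\in NC(n)$ is regarded as the permutation whose cycles are its blocks, each in increasing order. For $\pi\in NC(n)$ and a block $V\in\pi$, $S_{NC}^\delta(n,-n)_{\pi,V}$ is the set of $\sigma\in S_{NC}^\delta(n,-n)$ such that every cycle of $\sigma$ is either a cycle of $\pi\delta\pi^{-1}\delta$ or contained in $V\cup\delta(V)$, and every cycle of $\sigma$ contained in $V\cup\delta(V)$ is a through cycle.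 *)

From HB Require Import structures.
From mathcomp Require Import all_boot all_order all_fingroup.
Set Implicit Arguments. Unset Strict Implicit. Unset Printing Implicit Defensive.

(* [±n] is encoded as the finite type  bool * 'I_n :
   (false, i) stands for  i+1   and   (true, i) stands for  -(i+1). *)
Notation PM n := (bool * 'I_n)%type.

(* Composition in the paper's (right-to-left) convention:
   pcomp a b = a ∘ b, i.e. (pcomp a b) x = a (b x).
   (MathComp's (b * a)%g applies b first.) *)
Definition pcomp (T : finType) (a b : {perm T}) : {perm T} := (b * a)%g.

Definition delta_fun n (x : PM n) : PM n := (~~ x.1, x.2).
Lemma delta_fun_inj n : injective (@delta_fun n).
Proof.
by apply: (can_inj (g := @delta_fun n)) => -[b i]; rewrite /delta_fun /= negbK.
Qed.
Definition delta n : {perm PM n} := perm (@delta_fun_inj n).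

Definition lift_pos_fun n (p : {perm 'I_n}) (x : PM n) : PM n :=
  if x.1 then x else (false, p x.2).
Lemma lift_pos_fun_inj n (p : {perm 'I_n}) : injective (lift_pos_fun p).
Proof.
move=> [[] i] [[] j]; rewrite /lift_pos_fun /= => //= -[].
by move/perm_inj => ->.
Qed.
Definition lift_pos n (p : {perm 'I_n}) : {perm PM n} := perm (@lift_pos_fun_inj n p).

Definition gamma_I n : {perm 'I_n} := perm (@ordS_inj n).
Definition gamma n : {perm PM n} := lift_pos (gamma_I n).

(* gamma_n delta gamma_n^{-1} delta = (1,...,n)(-n,...,-1) *)
Definition cgd n : {perm PM n} :=
  pcomp (gamma n) (pcomp (delta n) (pcomp (gamma n)^-1 (delta n))).

(* #(sigma): number of cycles, including fixed points *)
Definition ncycles (T : finType) (s : {perm T}) : nat := #|porbits s|.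

Definition pairing (T : finType) (p : {perm T}) : bool :=
  [forall x, (p (p x) == x) && (p x != x)].

Definition SNC n (s : {perm PM n}) : bool :=
  [&& [transitive <<[set s; cgd n]>>, on [set: PM n] | 'P],
      ncycles s + ncycles (pcomp s^-1 (cgd n)) == 2 * n
    & pairing (pcomp s (delta n))].

Definition through n (C : {set PM n}) : bool :=
  [exists x in C, ~~ x.1] && [exists x in C, x.1].

Definition noncrossing n (P : {set {set 'I_n}}) : bool :=
  [forall a : 'I_n, forall b : 'I_n, forall c : 'I_n, forall d : 'I_n,
     [&& a < b, b < c, c < d, pblock P a == pblock P c & pblock P b == pblock P d]
     ==> (pblock P a == pblock P b)].
Definition NC n (P : {set {set 'I_n}}) : bool :=
  partition P [set: 'I_n] && noncrossing P.

Definition block_next n (P : {set {set 'I_n}}) (i : 'I_n) : 'I_n :=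
  let B := pblock P i in
  if [pick j in B | (i < j) && [forall k in B, (i < k) ==> (j <= k)]] is Some j
  then j
  else odflt i [pick j in B | [forall k in B, j <= k]].

(* Turning an injective function into a permutation (identity if not injective;
   for partitions P, block_next P is always a bijection). *)
Definition mkperm (T : finType) (f : T -> T) : {perm T} :=
  match injectiveP f with
  | ReflectT H => perm H
  | ReflectF _ => 1%g
  end.

(* pi in NC(n) regarded as the permutation whose cycles are its blocks *)
Definition pi_perm n (P : {set {set 'I_n}}) : {perm 'I_n} := mkperm (block_next P).

Definition pdpd n (P : {set {set 'I_n}}) : {perm PM n} :=
  let p := lift_pos (pi_perm P) in
  pcomp p (pcomp (delta n) (pcomp p^-1 (delta n))).

Definition VdV n (V : {set 'I_n}) : {set PM n} := [set x | x.2 \in V].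

(* "the cycle C of s is a cycle of tau": same orbit and s agrees with tau on it *)
Definition cycle_of_other (T : finType) (s tau : {perm T}) (C : {set T}) : bool :=
  (C \in porbits tau) && [forall x in C, s x == tau x].

Definition SNC_piV n (P : {set {set 'I_n}}) (V : {set 'I_n}) (s : {perm PM n}) : bool :=
  [&& SNC s,
      [forall C in porbits s, cycle_of_other s (pdpd P) C || (C \subset VdV V)]
    & [forall C in porbits s, (C \subset VdV V) ==> through C]].

From Pilot Require Import Defs.
From HB Require Import structures.
From mathcomp Require Import all_boot all_order all_fingroup.
From mathcomp Require Import zify.
Set Implicit Arguments. Unset Strict Implicit. Unset Printing Implicit Defensive.

(* Write c0 for [cgd n] = gamma_n delta gamma_n^-1 delta, whose two cycles are the positives and
   the negatives.  By transitivity some cycle of c0 s^-1 meets both signs, say at u > 0 and v < 0;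
   then c := (u v) c0 is a single cycle and the genus condition #(s) + #(c0 s^-1) = 2n becomes
   #(s) + #(c s^-1) = 2n + 1, i.e. s lies on a geodesic from 1 to c for the transposition length
   2n - #(.).  On such a geodesic, splitting a cycle of s along a chord of c and then along a
   crossing chord would keep c a single cycle, against the triangle inequality; so the cycles of s
   do not cross and each is traversed in the cyclic order of c.  Numbering the points along c, the
   positive non-through cycles of s are therefore the blocks of a non-crossing partition pi, on
   which s agrees with pi delta pi^-1 delta, while every through cycle meets the contiguous arc of
   negatives, so all of them fit in a single further block V.  Conversely V and pi are read off
   s: V collects the positives on through cycles and the other blocks are the positive cycles. *)

Local Open Scope group_scope.

Section CycleCount.
Variable T : finType.
Implicit Types (a b s : {perm T}) (w x y z : T).

Lemma permXS s i x : (s ^+ i.+1) x = s ((s ^+ i) x).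
Proof. by rewrite expgSr permM. Qed.

Lemma permXD s p q x : (s ^+ (p + q)) x = (s ^+ q) ((s ^+ p) x).
Proof. by rewrite expgD permM. Qed.

Lemma mem_porbit_perm s x : s x \in porbit s x.
Proof. by rewrite -{1}(expg1 s) mem_porbit. Qed.

Lemma porbit_eq s x y : y \in porbit s x -> porbit s y = porbit s x.
Proof. by move=> yx; apply/eqP; rewrite eq_porbit_mem. Qed.

Lemma ncycles_tpermM s x y :
  ncycles (tperm x y * s) + (x \notin porbit s y).*2 = ncycles s + (x != y).
Proof. exact: porbits_mul_tperm. Qed.

Lemma ncycles_mul_tperm s x y :
  ncycles (s * tperm x y) + (x \notin porbit s y).*2 = ncycles s + (x != y).
Proof.
rewrite /ncycles -porbitsV invMg tpermV -[porbits s]porbitsV -porbitV.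
exact: porbits_mul_tperm.
Qed.

Lemma ncycles_tpermM_split s x y :
  x \in porbit s y -> x != y -> ncycles (tperm x y * s) = (ncycles s).+1.
Proof. by move=> xy nxy; have := ncycles_tpermM s x y; rewrite xy nxy; lia. Qed.

Lemma ncycles_mul_tperm_split s x y :
  x \in porbit s y -> x != y -> ncycles (s * tperm x y) = (ncycles s).+1.
Proof. by move=> xy nxy; have := ncycles_mul_tperm s x y; rewrite xy nxy; lia. Qed.

Lemma ncycles_mul_tperm_merge s x y :
  x \notin porbit s y -> (ncycles (s * tperm x y)).+1 = ncycles s.
Proof.
move=> xy; have nxy : x != y by apply: contraNneq xy => ->; apply: porbit_id.
by have := ncycles_mul_tperm s x y; rewrite xy nxy; lia.
Qed.

Lemma ncycles_mul_tperm_ge s x y : ncycles s <= (ncycles (s * tperm x y)).+1.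
Proof.
have [->|nxy] := eqVneq x y; first by rewrite tperm1 mulg1.
have [xy|xy] := boolP (x \in porbit s y); first by rewrite (ncycles_mul_tperm_split xy nxy); lia.
by rewrite -(ncycles_mul_tperm_merge xy); lia.
Qed.

Lemma ncycles_le_card s : ncycles s <= #|T|.
Proof. exact: leq_imset_card. Qed.

(* The triangle inequality for the transposition length [#|T| - ncycles s]. *)
Lemma ncycles_mul a b : ncycles a + ncycles b <= ncycles (a * b) + #|T|.
Proof.
have [m] := ubnP (#|T| - ncycles b); elim: m a b => // m IHm a b lt_b.
have [->|nb] := eqVneq b 1; first by rewrite mulg1 leq_add2l ncycles_le_card.
have [x bx] : exists x, b x != x.
  apply/existsP; apply: contraR nb => /existsPn fixb; apply/eqP/permP => x.
  by rewrite perm1; apply/eqP; have := fixb x; rewrite negbK.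
pose t : {perm T} := tperm x (b x).
have split_b : ncycles (t * b) = (ncycles b).+1.
  apply: ncycles_tpermM_split; last by rewrite eq_sym.
  by rewrite porbit_sym mem_porbit_perm.
have le_tb := ncycles_le_card (t * b).
have lt_tb : #|T| - ncycles (t * b) < m by lia.
have -> : a * b = (a * t) * (t * b) by rewrite mulgA -(mulgA a) tperm2 mulg1.
have := IHm (a * t) (t * b) lt_tb.
by have := ncycles_mul_tperm_ge a x (b x); rewrite -/t; lia.
Qed.

Lemma expg_porbit_card s x : (s ^+ #|porbit s x|) x = x.
Proof. by rewrite permX iter_porbit. Qed.

Lemma expg_porbit_inj s x i j : i < #|porbit s x| -> j < #|porbit s x| ->
  (s ^+ i) x = (s ^+ j) x -> i = j.
Proof.
move=> lti ltj; rewrite !permX => eq_ij.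
have := nth_uniq x _ _ (uniq_traject_porbit s x); rewrite size_traject.
by move/(_ i j lti ltj); rewrite !nth_traject // eq_ij eqxx => /esym/eqP.
Qed.

Lemma porbit_expg s x y : y \in porbit s x ->
  exists2 i, i < #|porbit s x| & y = (s ^+ i) x.
Proof. by rewrite porbit_traject => /trajectP [i lti ->]; exists i; rewrite // permX. Qed.

Lemma expg_mod s x m : (s ^+ m) x = x -> forall i, (s ^+ i) x = (s ^+ (i %% m)) x.
Proof.
move=> sm i; rewrite {1}(divn_eq i m) permXD mulnC expgM.
suff -> : ((s ^+ m) ^+ (i %/ m)) x = x by [].
by elim: (i %/ m) => [|q IHq]; rewrite ?expg0 ?perm1 // permXS IHq sm.
Qed.

Lemma expg_mul_tperm_avoid s x y w i :
  (forall l, 0 < l <= i -> (s ^+ l) w \notin [set x; y]) ->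
  ((s * tperm x y) ^+ i) w = (s ^+ i) w.
Proof.
elim: i => [|i IHi] avoid; first by rewrite !expg0.
rewrite !permXS IHi => [|l /andP [l0 li]]; last by rewrite avoid // l0 ltnW.
have := avoid i.+1; rewrite ltnSn permXS !inE negb_or => /(_ isT) /andP [nx ny].
by rewrite permM tpermD // eq_sym.
Qed.

Lemma porbit_mul_tperm_out s x y w :
  x \notin porbit s w -> y \notin porbit s w -> porbit (s * tperm x y) w = porbit s w.
Proof.
move=> xw yw.
have iterE i : ((s * tperm x y) ^+ i) w = (s ^+ i) w.
  apply: expg_mul_tperm_avoid => l _; rewrite !inE negb_or.
  by apply/andP; split; [apply: contraNneq xw | apply: contraNneq yw] => <-; apply: mem_porbit.
by apply/setP => v; apply/porbitP/porbitP => -[i ->]; exists i; rewrite iterE.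
Qed.

Lemma porbit_mul_tperm_arc s x m : 0 < m ->
  (forall l, 0 < l < m -> (s ^+ l) x \notin [set x; (s ^+ m) x]) ->
  porbit (s * tperm x ((s ^+ m) x)) x = [set (s ^+ i) x | i : 'I_m].
Proof.
move=> m0 arc; set u := s * _.
have iterE i : i < m -> (u ^+ i) x = (s ^+ i) x.
  by move=> lti; apply: expg_mul_tperm_avoid => l /andP [l0 li]; rewrite arc // l0 (leq_ltn_trans li).
have um : (u ^+ m) x = x.
  by rewrite -(prednK m0) permXS iterE ?prednK // permM -permXS prednK // tpermR.
apply/setP => v; apply/porbitP/imsetP => [[i ->]|[i _ ->]].
  by exists (Ordinal (ltn_pmod i m0)); rewrite // (expg_mod um) iterE ?ltn_pmod.
by exists i; rewrite iterE.
Qed.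

Lemma porbit_mul_tperm_succ s x z : z \in porbit s x -> z != x ->
  z \in porbit (s * tperm x (s x)) (s x).
Proof.
move=> zx nzx; set y := s x; set L := #|porbit s y|.
have xy : x \in porbit s y by rewrite porbit_sym mem_porbit_perm.
have eq_orb : porbit s y = porbit s x by apply/eqP; rewrite eq_porbit_mem porbit_sym.
have L0 : 0 < L by rewrite lt0n card_porbit_neq0.
have yLx : (s ^+ L.-1) y = x.
  by apply: (@perm_inj _ s); rewrite -permXS prednK // expg_porbit_card.
have [i ltiL zE] : exists2 i, i < L & z = (s ^+ i) y by apply: porbit_expg; rewrite eq_orb.
rewrite zE in nzx *.
have ltiL1 : i < L.-1.
  have : i != L.-1 by apply: contra_neq nzx => ->.
  lia.
have inj l l' : (s ^+ l) y = (s ^+ l') y -> l < L -> l' < L -> l = l'.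
  by move=> e ltl ltl'; apply: expg_porbit_inj e.
rewrite -(@expg_mul_tperm_avoid s x y y i) ?mem_porbit // => l /andP [l0 li].
rewrite !inE negb_or; apply/andP; split; apply/eqP.
  by rewrite -yLx => /inj; lia.
by move=> e; have := inj l 0; rewrite expg0 perm1 => /(_ e); lia.
Qed.

Lemma porbit_fix s x y : s x = x -> y \in porbit s x -> y = x.
Proof.
move=> sx /porbitP [i ->].
by elim: i => [|i IHi]; rewrite ?expg0 ?perm1 // permXS IHi sx.
Qed.

Lemma porbit_ncycles1 s x : ncycles s = 1%N -> porbit s x = [set: T].
Proof.
rewrite /ncycles => /eqP /cards1P [A defA].
have allA y : porbit s y = A by apply/set1P; rewrite -defA imset_f.
by apply/setP => y; rewrite inE (allA x) -(allA y) porbit_id.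
Qed.

End CycleCount.

Section Geodesic.
Variables (T : finType) (c g : {perm T}).
Hypothesis c_cycle : ncycles c = 1%N.
(* Equality in [ncycles_mul] for [c = (c * g^-1) * g]: [g] lies on a geodesic from [1] to [c]. *)
Hypothesis g_geodesic : ncycles g + ncycles (c * g^-1) = #|T|.+1.

Lemma card_porbit_cycle x : #|porbit c x| = #|T|.
Proof. by rewrite porbit_ncycles1 // cardsT. Qed.

Lemma expg_cycle_card x : (c ^+ #|T|) x = x.
Proof. by rewrite -(card_porbit_cycle x) expg_porbit_card. Qed.

Lemma expg_cycle_inj x i j :
  (c ^+ i) x = (c ^+ j) x -> i < #|T| -> j < #|T| -> i = j.
Proof. by rewrite -(card_porbit_cycle x) => e lti ltj; apply: expg_porbit_inj e. Qed.

Lemma cycle_expg x y : exists2 i, i < #|T| & y = (c ^+ i) x.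
Proof. by rewrite -(card_porbit_cycle x); apply: porbit_expg; rewrite porbit_ncycles1. Qed.

(* The chord [t1] splits [c] into two cycles and the chord [t2] crossing it merges them again,
   so [c * t1 * t2] is a cycle; the subadditivity of [#|T| - ncycles] then bounds [g * t1 * t2]. *)
Lemma ncycles_crossing_tperms x m j k : j < m -> m <= k -> k < #|T| ->
  ncycles (g * tperm x ((c ^+ m) x) * tperm ((c ^+ j) x) ((c ^+ k) x)) <= ncycles g.
Proof.
move=> ltjm lemk ltkT; set t1 := tperm x _; set t2 := tperm _ _.
have inj i i' := @expg_cycle_inj x i i'.
have x_cm : (c ^+ 0) x != (c ^+ m) x by apply/eqP => /inj; lia.
rewrite expg0 perm1 in x_cm.
have split_c : ncycles (c * t1) = 2.
  by rewrite ncycles_mul_tperm_split ?c_cycle // porbit_ncycles1.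
have arc : porbit (c * t1) x = [set (c ^+ i) x | i : 'I_m].
  apply: porbit_mul_tperm_arc => [|l /andP [l0 lm]]; first by lia.
  rewrite !inE negb_or; apply/andP; split; apply/eqP => e.
    by have := inj l 0; rewrite expg0 perm1 => /(_ e); lia.
  by have := inj l m e; lia.
have merge : (c ^+ j) x \notin porbit (c * t1) ((c ^+ k) x).
  have cj : (c ^+ j) x \in porbit (c * t1) x by rewrite arc (imset_f _ (_ : Ordinal ltjm \in _)).
  rewrite porbit_sym (porbit_eq cj) arc; apply/imsetP => -[i _ /inj].
  by have := ltn_ord i; lia.
have := ncycles_mul (c * g^-1) (g * t1 * t2).
have -> : c * g^-1 * (g * t1 * t2) = c * t1 * t2 by rewrite !mulgA mulgKV.
by have := ncycles_mul_tperm_merge merge; rewrite -/t2; lia.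
Qed.

Lemma geodesic_arc x z m j : 0 < j < m -> m < #|T| ->
  (c ^+ m) x = g x -> (c ^+ j) x = z -> z \notin porbit g x.
Proof.
move=> /andP [j0 ltjm] ltmT cm cj; apply/negP => zx.
have inj i i' := @expg_cycle_inj x i i'.
have nxy : x != g x.
  by apply/eqP => e; have := inj 0 m; rewrite expg0 perm1 cm => /(_ e); lia.
have nzx : z != x.
  by apply/eqP => e; have := inj j 0; rewrite expg0 perm1 cj => /(_ e); lia.
have nzy : z != g x.
  by apply/eqP => e; have := inj j m; rewrite cm cj => /(_ e); lia.
have split1 : ncycles (g * tperm x (g x)) = (ncycles g).+1.
  by apply: ncycles_mul_tperm_split nxy; rewrite porbit_sym mem_porbit_perm.
have split2 : ncycles (g * tperm x (g x) * tperm z (g x)) = (ncycles g).+2.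
  by rewrite ncycles_mul_tperm_split ?split1 //; apply: porbit_mul_tperm_succ.
by have := ncycles_crossing_tperms x ltjm (leqnn m) ltmT; rewrite cm cj split2; lia.
Qed.

Lemma geodesic_cyclic_order o x z px py pz :
  px < #|T| -> py < #|T| -> pz < #|T| ->
  (c ^+ px) o = x -> (c ^+ py) o = g x -> (c ^+ pz) o = z ->
  [|| px < pz < py, py < px < pz | pz < py < px] -> z \notin porbit g x.
Proof.
move=> ltx lty ltz ex ey ez.
have wrap q : (c ^+ (#|T| + q)) o = (c ^+ q) o by rewrite permXD expg_cycle_card.
have rebase p q : px + p = q -> (c ^+ p) x = (c ^+ q) o by move=> <-; rewrite permXD ex.
case/or3P => /andP [lt1 lt2].
- apply: (@geodesic_arc _ _ (py - px) (pz - px)); try lia.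
    by rewrite -ey; apply: rebase; lia.
  by rewrite -ez; apply: rebase; lia.
- apply: (@geodesic_arc _ _ (#|T| - px + py) (pz - px)); try lia.
    by rewrite -ey -wrap; apply: rebase; lia.
  by rewrite -ez; apply: rebase; lia.
- apply: (@geodesic_arc _ _ (#|T| - px + py) (#|T| - px + pz)); try lia.
    by rewrite -ey -wrap; apply: rebase; lia.
  by rewrite -ez -wrap; apply: rebase; lia.
Qed.

Lemma geodesic_noncrossing o x1 y1 x2 y2 p1 q1 p2 q2 :
  p1 < q1 < p2 -> p2 < q2 < #|T| ->
  (c ^+ p1) o = x1 -> (c ^+ q1) o = y1 -> (c ^+ p2) o = x2 -> (c ^+ q2) o = y2 ->
  x2 \in porbit g x1 -> y2 \in porbit g y1 -> y1 \in porbit g x1.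
Proof.
move=> /andP [lt1 lt2] /andP [lt3 lt4] ex1 ey1 ex2 ey2 x21 y21; apply: contraT => y1x1.
have inj i i' := @expg_cycle_inj o i i'.
have nx12 : x1 != x2 by rewrite -ex1 -ex2; apply/eqP => /inj; lia.
have ny12 : y1 != y2 by rewrite -ey1 -ey2; apply/eqP => /inj; lia.
have split1 : ncycles (g * tperm x1 x2) = (ncycles g).+1.
  by apply: ncycles_mul_tperm_split nx12; rewrite porbit_sym.
have orb_y : porbit (g * tperm x1 x2) y2 = porbit g y1.
  have y2x1 : x1 \notin porbit g y2 by rewrite (porbit_eq y21) porbit_sym.
  have y2x2 : x2 \notin porbit g y2 by rewrite (porbit_eq y21) porbit_sym (porbit_eq x21).
  by rewrite porbit_mul_tperm_out // (porbit_eq y21).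
have split2 : ncycles (g * tperm x1 x2 * tperm y1 y2) = (ncycles g).+2.
  by rewrite ncycles_mul_tperm_split ?split1 // orb_y porbit_id.
have rebase p q : p1 + p = q -> (c ^+ p) x1 = (c ^+ q) o by move=> <-; rewrite permXD ex1.
have ex2' : (c ^+ (p2 - p1)) x1 = x2 by rewrite -ex2; apply: rebase; lia.
have ey1' : (c ^+ (q1 - p1)) x1 = y1 by rewrite -ey1; apply: rebase; lia.
have ey2' : (c ^+ (q2 - p1)) x1 = y2 by rewrite -ey2; apply: rebase; lia.
have := @ncycles_crossing_tperms x1 (p2 - p1) (q1 - p1) (q2 - p1).
by rewrite ex2' ey1' ey2' split2; lia.
Qed.

Lemma geodesic_same_side o x1 x2 y1 y2 p1 p2 q1 q2 :
  p1 < p2 < #|T| -> q1 < #|T| -> q2 < #|T| ->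
  (c ^+ p1) o = x1 -> (c ^+ p2) o = x2 -> (c ^+ q1) o = y1 -> (c ^+ q2) o = y2 ->
  x2 \in porbit g x1 -> y2 \in porbit g y1 -> y1 \notin porbit g x1 ->
  (p1 < q1 < p2) = (p1 < q2 < p2).
Proof.
move=> /andP [lt12 ltp2] ltq1 ltq2 ex1 ex2 ey1 ey2 x21 y21 y1x1.
have inj i i' := @expg_cycle_inj o i i'.
have y2x1 : y2 \notin porbit g x1 by rewrite porbit_sym (porbit_eq y21) porbit_sym.
have ne q y : (c ^+ q) o = y -> y \notin porbit g x1 -> q != p1 /\ q != p2.
  move=> ey yx1; split; apply: contraNneq yx1 => eq; rewrite -ey eq.
    by rewrite ex1 porbit_id.
  by rewrite ex2.
have [ne11 ne12] := ne _ _ ey1 y1x1; have [ne21 ne22] := ne _ _ ey2 y2x1.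
suff inside q q' y y' : (c ^+ q) o = y -> (c ^+ q') o = y' -> q' < #|T| ->
    q' != p1 -> q' != p2 -> y' \in porbit g y -> y \notin porbit g x1 ->
    p1 < q < p2 -> p1 < q' < p2.
  apply/idP/idP; first exact: inside ey1 ey2 ltq2 ne21 ne22 y21 y1x1.
  by apply: inside ey2 ey1 ltq1 ne11 ne12 _ y2x1; rewrite porbit_sym.
move=> ey ey' ltq' neq1 neq2 y'y yx1 /andP [lt1 lt2]; apply: contraNT yx1 => out.
have [lt'|lt'] : q' < p1 \/ p2 < q' by lia.
  rewrite porbit_sym -(porbit_eq y'y).
  apply: (geodesic_noncrossing _ _ ey' ex1 ey ex2 _ x21); try lia.
  by rewrite porbit_sym.
by apply: (geodesic_noncrossing _ _ ex1 ey ex2 ey' x21 y'y); lia.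
Qed.

End Geodesic.

Section BlockNext.
Variables (n : nat) (P : {set {set 'I_n}}).
Hypothesis P_part : partition P [set: 'I_n].

Let P_trivI : trivIset P.
Proof. by case/and3P: P_part. Qed.

Let mem_pblock_part i : i \in pblock P i.
Proof. by case/and3P: P_part => /eqP cov _ _; rewrite mem_pblock cov inE. Qed.

Variant block_next_spec i : 'I_n -> Prop :=
  | BlockNextSucc j of j \in pblock P i & i < j
      & (forall l, l \in pblock P i -> i < l -> j <= l) : block_next_spec i j
  | BlockNextWrap j of j \in pblock P i & (forall l, l \in pblock P i -> l <= i)
      & (forall l, l \in pblock P i -> j <= l) : block_next_spec i j.

Lemma block_nextP i : block_next_spec i (block_next P i).
Proof.
rewrite /block_next; set B := pblock P i.
case: pickP => [j /andP [jB /andP [ij /forall_inP minj]] | no_succ].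
  by apply: BlockNextSucc => // l lB il; have := minj l lB; rewrite il.
have maxi l : l \in B -> l <= i.
  move=> lB; rewrite leqNgt; apply/negP => il.
  have [j /andP [jB ij] minj] :=
    @arg_minnP _ l (fun j => (j \in B) && (i < j)) val (introT andP (conj lB il)).
  move: (no_succ j); rewrite jB ij /= => /negP; apply; apply/forall_inP => k kB.
  by apply/implyP => ik; apply: minj; rewrite kB.
have [j jB minj] := @arg_minnP _ i (fun j => j \in B) val (mem_pblock_part i).
case: pickP => [j' /andP [j'B /forall_inP minj'] | /(_ j)] /=.
  by apply: BlockNextWrap.
by rewrite jB => /negP []; apply/forall_inP => k; apply: minj.
Qed.

Lemma block_next_in i : block_next P i \in pblock P i.
Proof. by case: block_nextP. Qed.

Lemma block_next_succ i j : j \in pblock P i -> i < j ->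
  (forall l, l \in pblock P i -> i < l -> j <= l) -> block_next P i = j.
Proof.
move=> jB ij minj; case: block_nextP => [k kB ik mink | k _ maxi _].
  by apply/val_inj/eqP; rewrite eqn_leq mink // minj.
by have := maxi j jB; lia.
Qed.

Lemma block_next_cyclic i j : j \in pblock P i ->
  (forall l, l \in pblock P i -> ~~ [|| i < l < j, j < i < l | l < j < i]) ->
  (j = i -> forall l, l \in pblock P i -> l = i) -> block_next P i = j.
Proof.
move=> jB between fixi; have [e|ne] := eqVneq j i.
  by rewrite e; apply: (fixi e); apply: block_next_in.
have {}ne : (i : nat) != j by rewrite eq_sym.
apply/ord_inj/eqP; rewrite eqn_leq.
case: block_nextP => [k kB ik mink | k kB maxi mink].
  by have := between k kB; have := mink j jB; lia.
by have := between k kB; have := mink j jB; have := maxi j jB; lia.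
Qed.

Lemma block_next_inj : injective (block_next P).
Proof.
move=> i i' e.
have eqB : pblock P i' = pblock P i.
  rewrite -(same_pblock P_trivI (block_next_in i')) -e.
  exact: same_pblock P_trivI (block_next_in i).
have i'B : i' \in pblock P i by rewrite -eqB mem_pblock_part.
have iB' : i \in pblock P i' by rewrite eqB mem_pblock_part.
apply/val_inj/eqP; rewrite eqn_leq.
move: e; case: (block_nextP i) => [j _ ij minj | j _ maxi minj];
  case: (block_nextP i') => [j' _ ij' minj' | j' _ maxi' minj'] e; subst j'.
- by apply/andP; split; rewrite leqNgt; apply/negP => lt;
    [have := minj' i iB' lt | have := minj i' i'B lt]; lia.
- by have := minj' i iB'; lia.
- by have := minj i' i'B; lia.
- by rewrite maxi // maxi'.
Qed.

Lemma pi_permE : pi_perm P =1 block_next P.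
Proof.
rewrite /pi_perm /mkperm => i; case: injectiveP => [inj|].
  by rewrite permE.
by move/(_ block_next_inj).
Qed.

Lemma porbit_pi_perm i : porbit (pi_perm P) i = pblock P i.
Proof.
apply/setP => l; apply/idP/idP.
  case/porbitP => k ->; elim: k => [|k IHk]; first by rewrite expg0 perm1 mem_pblock_part.
  by rewrite permXS pi_permE -(same_pblock P_trivI IHk) block_next_in.
have [m mB minm] := @arg_minnP _ i (fun j => j \in pblock P i) val (mem_pblock_part i).
have reach x : x \in pblock P i -> x \in porbit (pi_perm P) m.
  have [k] := ubnP x; elim: k x => // k IHk x ltxk xB.
  have [->|nxm] := eqVneq x m; first exact: porbit_id.
  have ltmx : m < x.
    by rewrite ltn_neqAle minm // andbT; apply: contra_neq nxm => /val_inj.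
  have [x' /andP [x'B ltx'x] maxx'] :=
    @arg_maxnP _ m (fun y => (y \in pblock P i) && (y < x)) val (introT andP (conj mB ltmx)).
  have -> : x = pi_perm P x'.
    rewrite pi_permE; apply/esym/block_next_succ; rewrite ?(same_pblock P_trivI x'B) //.
    move=> y yB ltx'y; rewrite leqNgt; apply/negP => ltyx.
    by have := maxx' y; rewrite yB ltyx => /(_ isT) /=; lia.
  by rewrite -(porbit_eq (IHk x' _ x'B)) ?mem_porbit_perm //; lia.
by move=> lB; rewrite (porbit_eq (reach i (mem_pblock_part i))) reach.
Qed.

End BlockNext.

Section PlusMinus.
Variable n : nat.
Implicit Types (p : {perm 'I_n}) (w x y : PM n).

Definition pdpd_perm p : {perm PM n} :=
  Defs.pcomp (lift_pos p) (Defs.pcomp (delta n) (Defs.pcomp (lift_pos p)^-1 (delta n))).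

Lemma deltaE x : delta n x = (~~ x.1, x.2).
Proof. by rewrite permE. Qed.

Lemma deltaK : involutive (delta n).
Proof. by move=> [b i]; rewrite !deltaE negbK. Qed.

Lemma delta_false i : delta n (false, i) = (true, i).
Proof. by rewrite deltaE. Qed.

Lemma lift_posE p x : lift_pos p x = if x.1 then x else (false, p x.2).
Proof. by rewrite permE. Qed.

Lemma lift_posV p : (lift_pos p)^-1 = lift_pos p^-1.
Proof.
apply/permP => x; apply: (@perm_inj _ (lift_pos p)).
by rewrite permKV !lift_posE; case: x => [[] i] //=; rewrite permKV.
Qed.

Lemma pdpd_permE p x :
  pdpd_perm p x = if x.1 then (true, p^-1 x.2) else (false, p x.2).
Proof.
rewrite /pdpd_perm /Defs.pcomp !permM lift_posV !deltaE !lift_posE.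
by case: x => [[] i].
Qed.

Lemma pdpd_permX p k b i :
  (pdpd_perm p ^+ k) (b, i) = (b, ((if b then p^-1 else p) ^+ k) i).
Proof.
elim: k => [|k IHk]; first by rewrite !expg0 !perm1.
by rewrite !permXS IHk pdpd_permE; case: (b).
Qed.

Lemma porbit_pdpd_perm p b i :
  porbit (pdpd_perm p) (b, i) = [set (b, j) | j in porbit p i].
Proof.
have -> : porbit p i = porbit (if b then p^-1 else p) i by case: (b); rewrite ?porbitV.
apply/setP => y; apply/porbitP/imsetP => [[k ->]|[j /porbitP [k ->] ->]].
  by rewrite pdpd_permX; exists (((if b then p^-1 else p) ^+ k) i); rewrite ?mem_porbit.
by exists k; rewrite pdpd_permX.
Qed.

Lemma cgd_pdpd_perm : cgd n = pdpd_perm (gamma_I n).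
Proof. by []. Qed.

Lemma pdpd_pdpd_perm (P : {set {set 'I_n}}) : pdpd P = pdpd_perm (pi_perm P).
Proof. by []. Qed.

Lemma gamma_IX k i : val ((gamma_I n ^+ k) i) = (i + k) %% n.
Proof.
elim: k => [|k IHk]; first by rewrite expg0 perm1 addn0 modn_small.
by rewrite permXS permE /= IHk -addn1 modnDml addn1 addnS.
Qed.

Lemma porbit_gamma_I i : porbit (gamma_I n) i = [set: 'I_n].
Proof.
apply/setP => j; rewrite inE; apply/porbitP; exists (j + n - i); apply/val_inj.
rewrite /= gamma_IX (_ : i + _ = j + n); first by rewrite modnDr modn_small.
by have := ltn_ord i; lia.
Qed.

Lemma porbit_cgd b i : porbit (cgd n) (b, i) = [set y | y.1 == b].
Proof.
rewrite cgd_pdpd_perm porbit_pdpd_perm porbit_gamma_I.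
apply/setP => -[b' j]; rewrite !inE; apply/imsetP/eqP => [[k _ -> //] | /= ->].
by exists j; rewrite ?inE.
Qed.

Lemma ncycles_cgd : 0 < n -> ncycles (cgd n) = 2.
Proof.
rewrite /ncycles => n0; pose i0 := Ordinal n0.
have -> : porbits (cgd n) = [set porbit (cgd n) (false, i0); porbit (cgd n) (true, i0)].
  apply/setP => A; rewrite !inE; apply/imsetP/orP => [[[b i] _ ->]|].
    by rewrite !porbit_cgd; case: b; [right | left].
  by case=> /eqP ->; eexists.
rewrite cards2 !porbit_cgd; case: eqP => // /setP /(_ (false, i0)).
by rewrite !inE.
Qed.

Lemma transitive_side_change (s : {perm PM n}) : 0 < n ->
  [transitive <<[set s; cgd n]>>, on [set: PM n] | 'P] -> exists w, (s w).1 != w.1.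
Proof.
move=> n0 tr; apply/existsP; apply: contraT => /existsPn keep.
pose i0 := Ordinal n0.
have side h : h \in <<[set s; cgd n]>> -> forall w, (h w).1 = w.1.
  case/gen_prodgP => k [f gen ->].
  apply: (big_ind (fun h : {perm PM n} => forall w, (h w).1 = w.1)) => [w|h1 h2 IH1 IH2 w|i _ w].
  - by rewrite perm1.
  - by rewrite permM IH2 IH1.
  have := gen i; rewrite !inE => /orP [] /eqP ->; last by rewrite cgd_pdpd_perm pdpd_permE; case: w => [[] ?].
  by apply/eqP; have := keep w; rewrite negbK.
have : (true, i0) \in orbit 'P <<[set s; cgd n]>> (false, i0) by rewrite (atransP tr) ?inE.
by case/orbitP => h /side sideh; rewrite /= apermE => e; have := sideh (false, i0); rewrite e.
Qed.

End PlusMinus.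

Section Existence.
Variables (n : nat) (s : {perm PM n}).
Hypothesis n_gt0 : 0 < n.
Hypothesis s_SNC : SNC s.
Implicit Types (w x y : PM n) (k l : 'I_n).

Let s_transitive : [transitive <<[set s; cgd n]>>, on [set: PM n] | 'P].
Proof. by case/and3P: s_SNC. Qed.

Let s_ncycles : ncycles s + ncycles (cgd n * s^-1) = (2 * n)%N.
Proof. by case/and3P: s_SNC => _ /eqP. Qed.

Lemma perm_delta_SNC w : s (delta n w) = delta n (s^-1 w).
Proof.
case/and3P: s_SNC => _ _ /forallP /(_ (delta n (s^-1 w))) /andP [/eqP pair _].
by move: pair; rewrite /Defs.pcomp !permM deltaK permKV.
Qed.

Lemma porbit_delta_SNC x y : (delta n y \in porbit s (delta n x)) = (y \in porbit s x).
Proof.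
have iterE i z : (s ^+ i) (delta n z) = delta n ((s^-1 ^+ i) z).
  by elim: i => [|i IHi]; rewrite ?expg0 ?perm1 // !permXS IHi perm_delta_SNC.
rewrite -(porbitV s x); apply/porbitP/porbitP => -[i e]; exists i.
  by rewrite -[y]deltaK e iterE deltaK.
by rewrite iterE e.
Qed.

Definition through_at w := through (porbit s w).

Lemma through_at_delta w : through_at (delta n w) = through_at w.
Proof.
suff imp w' : through_at w' -> through_at (delta n w').
  by apply/idP/idP => /imp //; rewrite deltaK.
case/andP => /exists_inP [x xw x1] /exists_inP [y yw y1].
apply/andP; split; apply/exists_inP.
  by exists (delta n y); rewrite ?porbit_delta_SNC // deltaE negbK.
by exists (delta n x); rewrite ?porbit_delta_SNC // deltaE.
Qed.

Lemma through_at_porbit w y : y \in porbit s w -> through_at y = through_at w.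
Proof. by move=> yw; rewrite /through_at (porbit_eq yw). Qed.

Lemma porbit_side w y : ~~ through_at w -> y \in porbit s w -> y.1 = w.1.
Proof.
move=> nth yw; apply: contraNeq nth => ne; have ww := porbit_id s w.
have [[x xw x1] [x' x'w x'1]] : (exists2 x, x \in porbit s w & ~~ x.1) /\
                               (exists2 x, x \in porbit s w & x.1).
  case: w ww yw ne => [[] i] ww; case: y => [[] j] yw //= _.
    by split; [exists (false, j) | exists (true, i)].
  by split; [exists (false, i) | exists (true, j)].
by apply/andP; split; apply/exists_inP; [exists x | exists x'].
Qed.

Definition through_block := [set k | through_at (false, k)].

Lemma through_block_neq0 : exists k, k \in through_block.
Proof.
apply/existsP; apply: contraT => /existsPn none.
have nth k : ~~ through_at (false, k) by have := none k; rewrite inE.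
have [w /negP[]] := transitive_side_change n_gt0 s_transitive; apply/eqP.
apply: porbit_side (mem_porbit_perm s w).
case: w => [[] k]; last exact: nth.
by rewrite -delta_false through_at_delta.
Qed.

Lemma exists_cut : exists i j, (false, i) \in porbit (cgd n * s^-1) (true, j).
Proof.
set rho := cgd n * s^-1.
suff : [exists i, exists j, (false, i) \in porbit rho (true, j)].
  by case/existsP => i /existsP [j ij]; exists i, j.
apply: contraT => /existsPn none.
have rho_side w : (rho w).1 = w.1.
  case: w => [b k]; case side: (rho (b, k)).1; case: b side => //= side.
    have /existsPn/(_ (rho (false, k)).2) := none k.
    by rewrite -side -surjective_pairing porbit_sym mem_porbit_perm.
  have /existsPn/(_ k) := none (rho (true, k)).2.
  by rewrite -side -surjective_pairing mem_porbit_perm.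
have [w /negP[]] := transitive_side_change n_gt0 s_transitive; apply/eqP.
have cgdV_side y : ((cgd n)^-1 y).1 = y.1.
  have := mem_porbit_perm (cgd n)^-1 y; rewrite porbitV.
  by case: y => [b i]; rewrite porbit_cgd inE => /eqP.
by rewrite -{2}(permK s w) -[s^-1](mulKg (cgd n)) permM rho_side cgdV_side.
Qed.

Definition same_block k l :=
  (k \in through_block) && (l \in through_block) || ((false, l) \in porbit s (false, k)).

Lemma through_block_porbit k l :
  (false, l) \in porbit s (false, k) -> (l \in through_block) = (k \in through_block).
Proof. by move=> lk; rewrite !inE (through_at_porbit lk). Qed.

Lemma same_block_through k l : k \in through_block -> same_block k l = (l \in through_block).
Proof.
move=> kV; rewrite /same_block kV /=; apply/orP/idP => [[//|lk]|]; last by left.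
by rewrite (through_block_porbit lk).
Qed.

Lemma same_block_cycle k l :
  k \notin through_block -> same_block k l = ((false, l) \in porbit s (false, k)).
Proof. by rewrite /same_block => /negPf ->. Qed.

Lemma same_block_equiv : {in [set: 'I_n] & &, equivalence_rel same_block}.
Proof.
move=> k l m _ _ _; split; first by rewrite /same_block porbit_id orbT.
have [kV|kV] := boolP (k \in through_block).
  by rewrite !(same_block_through _ kV) => lV; rewrite same_block_through.
rewrite !(same_block_cycle _ kV) => lk.
by rewrite same_block_cycle ?(through_block_porbit lk) // (porbit_eq lk).
Qed.

Definition cycle_partition := equivalence_partition same_block [set: 'I_n].

Lemma cycle_partition_part : partition cycle_partition [set: 'I_n].
Proof. exact: equivalence_partitionP same_block_equiv. Qed.

Lemma pblock_cycle_partition k l : (l \in pblock cycle_partition k) = same_block k l.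
Proof. by rewrite (pblock_equivalence_partition same_block_equiv) ?inE. Qed.

Lemma through_block_in_partition : through_block \in cycle_partition.
Proof.
have [k kV] := through_block_neq0.
have -> : through_block = pblock cycle_partition k.
  by apply/setP => l; rewrite pblock_cycle_partition same_block_through.
by apply: pblock_mem; case/and3P: cycle_partition_part => /eqP -> _ _; rewrite inE.
Qed.

Lemma mem_VdV_through y : (y \in VdV through_block) = through_at y.
Proof.
case: y => [[] k]; rewrite !inE //=.
by rewrite -delta_false through_at_delta.
Qed.

Section Cut.
Variables i0 j0 : 'I_n.
Hypothesis cut : (false, i0) \in porbit (cgd n * s^-1) (true, j0).

Local Notation cc := (tperm (false, i0) (true, j0) * cgd n).
Local Notation b0 := (false, Ordinal n_gt0).

Let card_PM : #|{: PM n}| = (2 * n)%N.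
Proof. by rewrite card_prod card_bool card_ord. Qed.

Lemma ncycles_cc : ncycles cc = 1%N.
Proof.
have := ncycles_tpermM (cgd n) (false, i0) (true, j0).
by rewrite ncycles_cgd // porbit_cgd inE /= doubleS double0 addnC => /addnI.
Qed.

Lemma cc_geodesic : ncycles s + ncycles (cc * s^-1) = #|{: PM n}|.+1.
Proof.
by rewrite -mulgA ncycles_tpermM_split // addnS s_ncycles card_PM.
Qed.

(* The position of [(false, k)] along [cc] from [b0]: first the positives up to [i0], then the
   [n] negatives, then the remaining positives. *)
Definition pos k : nat := if k <= i0 then nat_of_ord k else (n + k)%N.

Lemma pos_lt k : pos k < #|{: PM n}|.
Proof. by rewrite card_PM /pos; have := ltn_ord k; case: (leqP k i0); lia. Qed.

Lemma ltn_pos k l : (pos k < pos l) = (k < l).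
Proof. by rewrite /pos; have := ltn_ord k; have := ltn_ord l; case: (leqP k i0); case: (leqP l i0); lia. Qed.

Lemma cc_pos k : k != i0 -> cc (false, k) = (false, gamma_I n k).
Proof.
move=> ki0; rewrite permM tpermD ?cgd_pdpd_perm ?pdpd_permE //.
by apply: contra_neq ki0 => -[].
Qed.

Lemma ccX_pos k : (cc ^+ pos k) b0 = (false, k).
Proof.
rewrite /pos; case: leqP => [|lt_i0k].
  case: k => m lt_mn /=; elim: m lt_mn => [|m IHm] lt_mn le_mi0.
    by rewrite expg0 perm1; congr (_, _); apply: val_inj.
  rewrite permXS (IHm (ltnW lt_mn) (ltnW le_mi0)) cc_pos; last first.
    by apply/eqP => /(congr1 val) /= e; move: le_mi0; rewrite -e ltnn.
  by congr (_, _); apply: val_inj; rewrite /= permE /= modn_small.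
have [d] := ubnP (n - k); elim: d k lt_i0k => // d IHd k lt_i0k lt_d.
have ki0 : k != i0 by apply/eqP => /(congr1 val) e; move: lt_i0k; rewrite e ltnn.
apply: (@perm_inj _ cc); rewrite -permXS cc_pos // -addnS.
have [last|lt_k1] := eqVneq k.+1 n.
  rewrite last addnn -mul2n -card_PM expg_cycle_card ?ncycles_cc //; congr (_, _).
  by apply: val_inj; rewrite /= permE /= last modnn.
have lt_k1n : k.+1 < n by have := ltn_ord k; lia.
rewrite (IHd (Ordinal lt_k1n)) /=; try lia.
by congr (_, _); apply: val_inj; rewrite /= permE /= modn_small.
Qed.

Lemma ccX_neg j : exists2 p, i0 < p <= n + i0 & (cc ^+ p) b0 = (true, j).
Proof.
have [p ltp ej] := cycle_expg ncycles_cc b0 (true, j).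
exists p => //; rewrite card_PM in ltp.
apply/negPn/negP; rewrite negb_and -!ltnNge => out.
have [k posk] : exists k, pos k = p.
  case/orP: out => lt.
    by exists (Ordinal (leq_trans lt (ltn_ord i0))); rewrite /pos /= -ltnS lt.
  have ltk : p - n < n by lia.
  by exists (Ordinal ltk); rewrite /pos /=; case: leqP; lia.
by move: ej; rewrite -posk ccX_pos.
Qed.

Lemma porbit_cyclic_order k l k' :
  s (false, k) = (false, k') -> (false, l) \in porbit s (false, k) ->
  ~~ [|| k < l < k', k' < k < l | l < k' < k].
Proof.
move=> sk lk; apply: contraL lk => order.
apply: (geodesic_cyclic_order ncycles_cc cc_geodesic (pos_lt k) (pos_lt k') (pos_lt l)
  (ccX_pos k) _ (ccX_pos l)); first by rewrite sk ccX_pos.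
by rewrite !ltn_pos.
Qed.

Lemma perm_pos_block_next k :
  k \notin through_block -> s (false, k) = (false, block_next cycle_partition k).
Proof.
move=> kV; have nth : ~~ through_at (false, k) by rewrite inE in kV.
have blockE l : (l \in pblock cycle_partition k) = ((false, l) \in porbit s (false, k)).
  by rewrite pblock_cycle_partition same_block_cycle.
set k' := (s (false, k)).2.
have sk : s (false, k) = (false, k').
  by rewrite [LHS]surjective_pairing (porbit_side nth (mem_porbit_perm s _)).
rewrite sk; congr (_, _); apply/esym/(block_next_cyclic cycle_partition_part).
- by rewrite blockE -sk mem_porbit_perm.
- by move=> l; rewrite blockE; apply: porbit_cyclic_order.
move=> e l; rewrite blockE => lk.
have sfix : s (false, k) = (false, k) by rewrite sk e.
by case: (porbit_fix sfix lk).
Qed.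

Lemma through_block_neg k : k \in through_block -> exists j, (true, j) \in porbit s (false, k).
Proof.
by rewrite inE => /andP [_ /exists_inP [[b j] jk /= b1]]; exists j; rewrite -b1.
Qed.

(* Every through cycle meets the arc of negatives, which starts right after [i0], and does not
   cross the chord [(k, l)] of a non-through cycle. *)
Lemma through_block_inside k l a :
  k \notin through_block -> (false, l) \in porbit s (false, k) -> pos k < pos l ->
  a \in through_block -> (pos k < pos a < pos l) = (k <= i0 < l).
Proof.
move=> kV lk ltkl aV.
have [j ja] := through_block_neg aV.
have [p /andP [lt_i0p le_p] ep] := ccX_neg j.
have ak : (false, a) \notin porbit s (false, k).
  by apply: contra kV => /through_block_porbit <-.
have ltp : p < #|{: PM n}| by rewrite card_PM; have := ltn_ord i0; lia.
rewrite (geodesic_same_side ncycles_cc cc_geodesic _ (pos_lt a) ltp (ccX_pos k) (ccX_pos l)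
  (ccX_pos a) ep lk ja ak); last by rewrite ltkl pos_lt.
move: ltkl; rewrite /pos; have := ltn_ord k; have := ltn_ord l.
by case: (leqP k i0); case: (leqP l i0); lia.
Qed.

Lemma cycle_partition_noncrossing : noncrossing cycle_partition.
Proof.
have [/eqP cov trivP _] := and3P cycle_partition_part.
have blockE k l : (pblock cycle_partition k == pblock cycle_partition l) = same_block k l.
  by rewrite eq_pblock // ?pblock_cycle_partition // cov inE.
apply/forallP => a; apply/forallP => b; apply/forallP => c; apply/forallP => d.
apply/implyP; rewrite !blockE => /and5P [ab bc cd eac ebd]; apply: contraT => nab.
have [aV|aV] := boolP (a \in through_block).
  have bV : b \notin through_block by apply: contra nab => bV; rewrite same_block_through.
  rewrite same_block_through // in eac; rewrite same_block_cycle // in ebd.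
  have ltbd : pos b < pos d by rewrite ltn_pos; lia.
  have := through_block_inside bV ebd ltbd aV; rewrite -(through_block_inside bV ebd ltbd eac) !ltn_pos.
  lia.
rewrite same_block_cycle // in eac; rewrite same_block_cycle // in nab.
have ltac : pos a < pos c by rewrite ltn_pos; lia.
have [bV|bV] := boolP (b \in through_block).
  rewrite same_block_through // in ebd.
  have := through_block_inside aV eac ltac bV; rewrite -(through_block_inside aV eac ltac ebd) !ltn_pos.
  lia.
rewrite same_block_cycle // in ebd.
have := geodesic_same_side ncycles_cc cc_geodesic _ (pos_lt b) (pos_lt d) (ccX_pos a)
  (ccX_pos c) (ccX_pos b) (ccX_pos d) eac ebd nab.
by rewrite pos_lt andbT !ltn_pos; lia.
Qed.

Lemma perm_nonthrough w : ~~ through_at w -> s w = pdpd cycle_partition w.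
Proof.
have Pc := cycle_partition_part.
have posE k : k \notin through_block -> s (false, k) = (false, pi_perm cycle_partition k).
  by move=> kV; rewrite pi_permE // perm_pos_block_next.
rewrite pdpd_pdpd_perm pdpd_permE; case: w => [[] k] nth /=; last by apply: posE; rewrite inE.
have nthk : ~~ through_at (false, k) by rewrite -through_at_delta delta_false.
set y := s^-1 (false, k).
have yk : y \in porbit s (false, k) by rewrite -porbitV mem_porbit_perm.
have ey : y = (false, y.2) by rewrite [LHS]surjective_pairing (porbit_side nthk yk).
have y2V : y.2 \notin through_block by rewrite inE -ey (through_at_porbit yk).
have ek : pi_perm cycle_partition y.2 = k by have := posE _ y2V; rewrite -ey /y permKV => -[].
by rewrite -{2}ek permK -delta_false perm_delta_SNC -/y {1}ey delta_false.
Qed.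

Lemma porbit_nonthrough w : ~~ through_at w -> porbit s w = porbit (pdpd cycle_partition) w.
Proof.
move=> nth.
have iterE i : (s ^+ i) w = (pdpd cycle_partition ^+ i) w.
  elim: i => [|i IHi]; rewrite ?expg0 // !permXS -IHi perm_nonthrough //.
  by rewrite (through_at_porbit (mem_porbit s i w)).
by apply/setP => y; apply/porbitP/porbitP => -[i ->]; exists i; rewrite iterE.
Qed.

Lemma SNC_piV_cycle_partition : SNC_piV cycle_partition through_block s.
Proof.
apply/and3P; split => //; apply/forall_inP => _ /imsetP [w _ ->].
  have [th|nth] := boolP (through_at w).
    apply/orP; right; apply/subsetP => y yw.
    by rewrite mem_VdV_through (through_at_porbit yw).
  apply/orP; left; apply/andP; split; first by rewrite porbit_nonthrough // imset_f.
  apply/forall_inP => y yw; rewrite perm_nonthrough //.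
  by rewrite (through_at_porbit yw).
apply/implyP => /subsetP /(_ w (porbit_id s w)).
by rewrite mem_VdV_through.
Qed.

End Cut.

Lemma SNC_decomposition : exists P V, [/\ NC P, V \in P & SNC_piV P V s].
Proof.
have [i [j cut]] := exists_cut.
exists cycle_partition, through_block; split.
- by rewrite /NC cycle_partition_part (cycle_partition_noncrossing cut).
- exact: through_block_in_partition.
- exact: SNC_piV_cycle_partition cut.
Qed.

End Existence.

Lemma pblock_imset (T : finType) (P : {set {set T}}) (D : {set T}) :
  partition P D -> pblock P @: D = P.
Proof.
case/and3P => /eqP cov trivP P0; apply/setP => B; apply/imsetP/idP => [[x Dx ->]|BP].
  by apply: pblock_mem; rewrite cov.
have /set0Pn [x xB] : B != set0 by apply: contraNneq P0 => <-.
by exists x; rewrite ?(def_pblock trivP BP xB) // -cov; apply/bigcupP; exists B.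
Qed.

Section Uniqueness.
Variables (n : nat) (s : {perm PM n}) (P : {set {set 'I_n}}) (V : {set 'I_n}).
Hypotheses (P_NC : NC P) (VP : V \in P) (sPV : SNC_piV P V s).
Implicit Types k l : 'I_n.

Let P_part : partition P [set: 'I_n].
Proof. by case/andP: P_NC. Qed.

Lemma porbit_pdpd_pos k y :
  (y \in porbit (pdpd P) (false, k)) = (y.1 == false) && (y.2 \in pblock P k).
Proof.
rewrite pdpd_pdpd_perm porbit_pdpd_perm porbit_pi_perm //.
by apply/imsetP/andP => [[l lB ->]|[/eqP y1 y2B]]; last exists y.2; rewrite -?y1 -?surjective_pairing.
Qed.

Lemma SNC_piV_cycle k :
  porbit s (false, k) = porbit (pdpd P) (false, k) \/
  porbit s (false, k) \subset VdV V /\ through (porbit s (false, k)).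
Proof.
have orbk : porbit s (false, k) \in porbits s by apply: imset_f.
case/and3P: sPV => _ /forall_inP /(_ _ orbk) /orP [/andP [/imsetP [w _ ew] _]|sub].
  by left; rewrite ew -(porbit_eq (_ : (false, k) \in porbit (pdpd P) w)) // -ew porbit_id.
by case/and3P: sPV => _ _ /forall_inP /(_ _ orbk) /implyP /(_ sub); right.
Qed.

Lemma SNC_piV_through k : (k \in V) = through (porbit s (false, k)).
Proof.
case: (SNC_piV_cycle k) => [e|[sub ->]]; last first.
  by move/subsetP: sub => /(_ (false, k) (porbit_id _ _)); rewrite inE.
have nth : ~~ through (porbit s (false, k)).
  by rewrite e; apply/negP => /andP [_ /exists_inP [y]]; rewrite porbit_pdpd_pos => /andP [/eqP ->].
rewrite (negPf nth); apply/negP => kV.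
have [_ trivP _] := and3P P_part.
have sub : porbit s (false, k) \subset VdV V.
  by apply/subsetP => y; rewrite e porbit_pdpd_pos inE (def_pblock trivP VP kV) => /andP [].
have orbk : porbit s (false, k) \in porbits s by apply: imset_f.
by case/and3P: sPV => _ _ /forall_inP /(_ _ orbk) /implyP /(_ sub); rewrite (negPf nth).
Qed.

Lemma SNC_piV_block k : k \notin V -> pblock P k = [set l | (false, l) \in porbit s (false, k)].
Proof.
move=> kV; case: (SNC_piV_cycle k) => [e|[_ th]]; last by move: kV; rewrite SNC_piV_through th.
by apply/setP => l; rewrite inE e porbit_pdpd_pos.
Qed.

End Uniqueness.

Lemma SNC_piV_unique n (s : {perm PM n}) P1 P2 V1 V2 :
  NC P1 -> V1 \in P1 -> NC P2 -> V2 \in P2 ->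
  SNC_piV P1 V1 s -> SNC_piV P2 V2 s -> P1 = P2 /\ V1 = V2.
Proof.
move=> NC1 V1P NC2 V2P s1 s2.
have eqV : V1 = V2.
  by apply/setP => k; rewrite (SNC_piV_through NC1 V1P s1) (SNC_piV_through NC2 V2P s2).
split => //.
have [part1 part2] : partition P1 [set: 'I_n] /\ partition P2 [set: 'I_n].
  by case/andP: NC1; case/andP: NC2.
rewrite -(pblock_imset part1) -(pblock_imset part2); apply: eq_imset => k.
have [kV|kV] := boolP (k \in V1).
  have [[_ triv1 _] [_ triv2 _]] := (and3P part1, and3P part2).
  by rewrite (def_pblock triv1 V1P kV) (def_pblock triv2 V2P) -?eqV.
by rewrite (SNC_piV_block NC1 V1P s1 kV) (SNC_piV_block NC2 V2P s2) -?eqV.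
Qed.

Theorem lemma6p8 (n : nat) (hn : 2 <= n) :
  (forall s : {perm bool * 'I_n},
     SNC s <-> exists (P : {set {set 'I_n}}) (V : {set 'I_n}),
                 [/\ NC P, V \in P & SNC_piV P V s]) /\
  (forall (P1 P2 : {set {set 'I_n}}) (V1 V2 : {set 'I_n}) (s : {perm bool * 'I_n}),
     NC P1 -> V1 \in P1 -> NC P2 -> V2 \in P2 ->
     SNC_piV P1 V1 s -> SNC_piV P2 V2 s -> P1 = P2 /\ V1 = V2).
Proof.
split; last by move=> P1 P2 V1 V2 s; apply: SNC_piV_unique.
move=> s; split; first exact: SNC_decomposition (ltnW hn).
by case=> P [V [_ _ /and3P []]].
Qed.
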